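(* Let $n\ge p\ge1$, $0<\varepsilon<1$, $\lambda>0$, $\tilde a>0$, and let $\mathrm{St}(p,n)^\varepsilon=\{X\in\mathbb{R}^{n\times p}:\|X^\top X-I_p\|\le\varepsilon\}$. For each $k\ge0$ let $\mathcal{A}_k$ be a map sending $(X_0,\dots,X_k)\in(\mathbb{R}^{n\times p})^{k+1}$ to a skew-symmetric matrix in $\mathbb{R}^{n\times n}$, such that $\|\mathcal{A}_k(X_0,\dots,X_k)X_k\|\le\tilde a$ whenever $X_0,\dots,X_k\in\mathrm{St}(p,n)^\varepsilon$. Let $X_0\in\mathrm{St}(p,n)^\varepsilon$ and define recursively $A_k=\mathcal{A}_k(X_0,\dots,X_k)$ and $X_{k+1}=X_k-\eta_k\big(A_kX_k+\lambda X_k(X_k^\top X_k-I_p)\big)$ with step sizes $\eta_k>0$. If $\eta_k\le\eta^*(\tilde a,\varepsilon,\lambda)$ for all $k$, then $X_k\in\mathrm{St}(p,n)^\varepsilon$ for all $k\ge0$.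
   Context: $\|\cdot\|$ is the Frobenius norm. $\eta^*(\tilde a,\varepsilon,\lambda)=\min\{Q(\lambda,\varepsilon,\tilde a),\frac1{2\lambda}\}$ with $Q(\lambda,\varepsilon,\tilde a)=\inf_{a\in(0,\tilde a],\,d\in(0,\varepsilon]}\frac{\lambda(1-\varepsilon)d+a\sqrt{(\varepsilon-d)/2}}{a^2+\lambda^2(1+\varepsilon)d^2}$. *)

From HB Require Import structures.
From mathcomp Require Import all_boot all_order all_algebra.
From mathcomp Require Import all_classical all_reals.
Set Implicit Arguments. Unset Strict Implicit. Unset Printing Implicit Defensive.
Import Order.TTheory GRing.Theory Num.Theory.
Local Open Scope ring_scope.
Local Open Scope classical_set_scope.

Definition frob (R : realType) (m n : nat) (A : 'M[R]_(m, n)) : R :=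
  Num.sqrt (\sum_(i < m) \sum_(j < n) A i j ^+ 2).

Definition St_eps (R : realType) (n p : nat) (eps : R) (X : 'M[R]_(n, p)) : Prop :=
  frob (X^T *m X - 1%:M) <= eps.

Definition Qfun (R : realType) (lambda eps at_ : R) : R :=
  inf [set q : R | exists a d : R,
         [/\ 0 < a, a <= at_, 0 < d, d <= eps &
          q = (lambda * (1 - eps) * d + a * Num.sqrt ((eps - d) / 2)) /
              (a ^+ 2 + lambda ^+ 2 * (1 + eps) * d ^+ 2)]].

Definition eta_star (R : realType) (at_ eps lambda : R) : R :=
  Num.min (Qfun lambda eps at_) (1 / (2 * lambda)).

From HB Require Import structures.
From mathcomp Require Import all_boot all_order all_algebra.
From mathcomp Require Import all_classical all_reals.
From mathcomp Require Import ring lra.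
Set Implicit Arguments. Unset Strict Implicit. Unset Printing Implicit Defensive.
Import Order.TTheory GRing.Theory Num.Theory.
Local Open Scope ring_scope.

(* Write M = X^T X - I, d = ||M||, t = eta lambda, and G = A X + lambda X M for the
   landing field of the iteration.  Since A is skew-symmetric, X^T G + G^T X =
   2 lambda (M + M^2), so one step maps M to (1 - 2t) M - 2t M^2 + eta^2 G^T G.
   Skew-symmetry also makes A X orthogonal to X M, and ||X M||^2 = d^2 + <M, M^2>;
   hence ||G||^2 <= ||A X||^2 + lambda^2 (d^2 + d^3) and the new defect is at most
   (1 - 2t) d + 2t d^2 + eta^2 (||A X||^2 + lambda^2 (d^2 + d^3)).  This is at most
   eps whenever d <= eps, ||A X|| <= atilde, t <= 1/2 and
   eta (atilde^2 + lambda^2 (1 + eps) eps^2) <= lambda (1 - eps) eps.  The last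
   condition is the quotient defining Q evaluated at a = atilde, d = eps, so it
   follows from eta <= eta*, and induction on k concludes. *)

Lemma cauchy_schwarz_sum (R : realDomainType) (I : finType) (u v : I -> R) :
  (\sum_i u i * v i) ^+ 2 <= (\sum_i u i ^+ 2) * (\sum_i v i ^+ 2).
Proof.
set a := \sum_i u i ^+ 2; set b := \sum_i v i ^+ 2; set c := \sum_i u i * v i.
have b_ge0 : 0 <= b by apply: sumr_ge0 => i _; exact: sqr_ge0.
have [b0 | b_neq0] := eqVneq b 0.
  have v0 i : v i = 0.
    by apply/eqP; rewrite -sqrf_eq0; apply/eqP/(psumr_eq0P _ b0) => // j _; exact: sqr_ge0.
  have -> : c = 0 by rewrite /c big1 // => i _; rewrite v0 mulr0.
  by rewrite b0 expr0n mulr0.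
have b_gt0 : 0 < b by rewrite lt_def b_neq0.
have : 0 <= \sum_i (b * u i - c * v i) ^+ 2 by apply: sumr_ge0 => i _; exact: sqr_ge0.
have -> : \sum_i (b * u i - c * v i) ^+ 2 = b * (a * b - c ^+ 2).
  rewrite (eq_bigr (fun i => b ^+ 2 * u i ^+ 2 - 2 * b * c * (u i * v i)
                             + c ^+ 2 * v i ^+ 2)) => [|i _]; last by ring.
  by rewrite !big_split /= sumrN -!mulr_sumr -/a -/b -/c; ring.
by rewrite pmulr_rge0 // subr_ge0 mulrC.
Qed.

Lemma mxtrace_skew_sym (R : numDomainType) n (S M : 'M[R]_n) :
  S^T = - S -> M^T = M -> \tr (S *m M) = 0.
Proof.
move=> skS symM; have /eqP : \tr (S *m M) = - \tr (S *m M).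
  by rewrite -[LHS]mxtrace_tr trmx_mul symM skS mulmxN raddfN mxtrace_mulC.
by rewrite -addr_eq0 -mulr2n mulrn_eq0 => /eqP.
Qed.

Section Frobenius.
Variable R : realType.

Definition frob_dot {m n} (A B : 'M[R]_(m, n)) : R := \tr (A^T *m B).

Lemma frob_dotE m n (A B : 'M[R]_(m, n)) :
  frob_dot A B = \sum_i \sum_j A i j * B i j.
Proof.
rewrite /frob_dot /mxtrace exchange_big; apply: eq_bigr => j _; rewrite mxE.
by apply: eq_bigr => i _; rewrite mxE.
Qed.

Lemma frob_ge0 m n (A : 'M[R]_(m, n)) : 0 <= frob A.
Proof. exact: sqrtr_ge0. Qed.

Lemma frob_sqr m n (A : 'M[R]_(m, n)) : frob A ^+ 2 = \sum_i \sum_j A i j ^+ 2.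
Proof.
by rewrite sqr_sqrtr // sumr_ge0 // => i _; rewrite sumr_ge0 // => j _; exact: sqr_ge0.
Qed.

Lemma frob_dotxx m n (A : 'M[R]_(m, n)) : frob_dot A A = frob A ^+ 2.
Proof.
by rewrite frob_dotE frob_sqr; apply: eq_bigr => i _; apply: eq_bigr => j _; rewrite expr2.
Qed.

Lemma frob_sqrD m n (A B : 'M[R]_(m, n)) :
  frob (A + B) ^+ 2 = frob A ^+ 2 + 2 * frob_dot A B + frob B ^+ 2.
Proof.
rewrite -!frob_dotxx /frob_dot !linearD /= !mulmxDl !mxtraceD.
rewrite -[\tr (B^T *m A)]mxtrace_tr trmx_mul trmxK; ring.
Qed.

Lemma frob_dot_le m n (A B : 'M[R]_(m, n)) : frob_dot A B <= frob A * frob B.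
Proof.
have : frob_dot A B ^+ 2 <= (frob A * frob B) ^+ 2.
  by rewrite exprMn !frob_sqr frob_dotE !pair_bigA; exact: cauchy_schwarz_sum.
have := mulr_ge0 (frob_ge0 A) (frob_ge0 B); nra.
Qed.

Lemma ler_frobD m n (A B : 'M[R]_(m, n)) : frob (A + B) <= frob A + frob B.
Proof.
rewrite -(@ler_pXn2r _ 2) ?nnegrE ?addr_ge0 ?frob_ge0 // frob_sqrD sqrrD.
have := frob_dot_le A B; lra.
Qed.

Lemma frobZ m n a (A : 'M[R]_(m, n)) : frob (a *: A) = `|a| * frob A.
Proof.
rewrite /frob -sqrtr_sqr -sqrtrM ?sqr_ge0 // mulr_sumr; congr Num.sqrt.
by apply: eq_bigr => i _; rewrite mulr_sumr; apply: eq_bigr => j _; rewrite mxE exprMn.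
Qed.

Lemma ler_frobB m n (A B : 'M[R]_(m, n)) : frob (A - B) <= frob A + frob B.
Proof. by rewrite -[frob B]mul1r -normrN1 -frobZ scaleN1r; exact: ler_frobD. Qed.

Lemma frob_tr m n (A : 'M[R]_(m, n)) : frob A^T = frob A.
Proof.
rewrite /frob exchange_big; congr Num.sqrt.
by apply: eq_bigr => j _; apply: eq_bigr => i _; rewrite mxE.
Qed.

Lemma ler_frobM m n k (A : 'M[R]_(m, n)) (B : 'M[R]_(n, k)) :
  frob (A *m B) <= frob A * frob B.
Proof.
rewrite -(@ler_pXn2r _ 2) ?nnegrE ?mulr_ge0 ?frob_ge0 // exprMn !frob_sqr.
rewrite mulr_suml; apply: ler_sum => i _.
rewrite [X in _ <= _ * X]exchange_big /= mulr_sumr; apply: ler_sum => j _.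
rewrite mxE; exact: cauchy_schwarz_sum.
Qed.

Lemma frob_dot_skew_sym n p (A : 'M[R]_n) (X : 'M[R]_(n, p)) (M : 'M[R]_p) :
  A^T = - A -> M^T = M -> frob_dot (A *m X) (X *m M) = 0.
Proof.
move=> skA symM; rewrite /frob_dot trmx_mul skA mulmxN mulmxA.
apply: mxtrace_skew_sym symM.
by rewrite trmx_mul !linearN /= trmx_mul trmxK skA mulNmx mulmxN mulNmx mulmxA.
Qed.

End Frobenius.

Section LandingAlgebra.
Variable R : comPzRingType.

Definition orth_defect n p (X : 'M[R]_(n, p)) : 'M[R]_p := X^T *m X - 1%:M.

Definition landing_dir n p (A : 'M[R]_n) (X : 'M[R]_(n, p)) (lambda : R) :=
  A *m X + lambda *: (X *m orth_defect X).

Lemma orth_defect_sym n p (X : 'M[R]_(n, p)) : (orth_defect X)^T = orth_defect X.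
Proof. by rewrite /orth_defect linearB /= trmx_mul trmxK trmx1. Qed.

Lemma orth_defect_landing_step n p (A : 'M[R]_n) (X : 'M[R]_(n, p)) (lambda eta : R) :
  A^T = - A ->
  orth_defect (X - eta *: landing_dir A X lambda)
  = (1 - 2 * (eta * lambda)) *: orth_defect X
    - (2 * (eta * lambda)) *: (orth_defect X *m orth_defect X)
    + eta ^+ 2 *: ((landing_dir A X lambda)^T *m landing_dir A X lambda).
Proof.
move=> skA; set M := orth_defect X; set G := landing_dir A X lambda.
set S := X^T *m (A *m X).
have XtX : X^T *m X = M + 1%:M by rewrite subrK.
have skS : S^T = - S by rewrite /S !trmx_mul trmxK skA mulmxN mulNmx mulmxA.
have XtG : X^T *m G = S + lambda *: (M + M *m M).
  by rewrite /G /landing_dir -/M mulmxDr -scalemxAr [X^T *m (X *m M)]mulmxA XtX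
    mulmxDl mul1mx [M *m M + M]addrC.
have GtX : G^T *m X = - S + lambda *: (M + M *m M).
  rewrite -[LHS]trmxK trmx_mul trmxK XtG linearD /= skS linearZ /= linearD /=.
  by rewrite trmx_mul orth_defect_sym.
clearbody M S.
have trXG : (X - eta *: G)^T = X^T - eta *: G^T by apply/matrixP => i j; rewrite !mxE.
rewrite /orth_defect trXG mulmxBl !mulmxBr -!scalemxAl -!scalemxAr.
rewrite XtX XtG GtX scalerA; move: (M *m M) (G^T *m G) => MM GG.
by apply/matrixP => i j; rewrite !mxE; ring.
Qed.

End LandingAlgebra.

Section LandingNorms.
Variable R : realType.
Variables (n p : nat) (A : 'M[R]_n) (X : 'M[R]_(n, p)).
Hypothesis skA : A^T = - A.
Local Notation M := (orth_defect X).
Local Notation d := (frob (orth_defect X)).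

Lemma frob_mul_orth_defect : frob (X *m M) ^+ 2 = d ^+ 2 + frob_dot M (M *m M).
Proof.
rewrite -!frob_dotxx /frob_dot trmx_mul !orth_defect_sym.
have XtX : X^T *m X = M + 1%:M by rewrite subrK.
move: (orth_defect X) XtX => D XtX.
by rewrite mulmxA -[D *m X^T *m X]mulmxA XtX mulmxDr mulmx1 mulmxDl mxtraceD addrC mulmxA.
Qed.

Lemma frob_landing_dir_le lambda :
  frob (landing_dir A X lambda) ^+ 2
  <= frob (A *m X) ^+ 2 + lambda ^+ 2 * (d ^+ 2 + d ^+ 3).
Proof.
have orth : frob_dot (A *m X) (lambda *: (X *m M)) = 0.
  by rewrite scalemxAr frob_dot_skew_sym // linearZ /= orth_defect_sym.
rewrite frob_sqrD orth mulr0 addr0 frobZ exprMn real_normK ?num_real // frob_mul_orth_defect.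
rewrite lerD2l; apply: ler_wpM2l; first exact: sqr_ge0.
rewrite lerD2l; apply: le_trans (frob_dot_le _ _) _.
rewrite exprS; apply: ler_wpM2l; first exact: frob_ge0.
by rewrite expr2; exact: ler_frobM.
Qed.

Lemma frob_orth_defect_landing_step_le lambda eta :
  0 <= eta * lambda <= 1 / 2 ->
  frob (orth_defect (X - eta *: landing_dir A X lambda))
  <= (1 - 2 * (eta * lambda)) * d + 2 * (eta * lambda) * d ^+ 2
     + eta ^+ 2 * (frob (A *m X) ^+ 2 + lambda ^+ 2 * (d ^+ 2 + d ^+ 3)).
Proof.
move=> /andP[t_ge0 t_le].
have one_sub_ge0 : 0 <= 1 - 2 * (eta * lambda) by lra.
have two_t_ge0 : 0 <= 2 * (eta * lambda) by lra.
rewrite orth_defect_landing_step //; apply: le_trans (ler_frobD _ _) _; apply: lerD.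
  apply: le_trans (ler_frobB _ _) _; rewrite !frobZ !ger0_norm // lerD2l.
  by apply: ler_wpM2l => //; rewrite expr2; exact: ler_frobM.
rewrite frobZ ger0_norm ?sqr_ge0 //; apply: ler_wpM2l; first exact: sqr_ge0.
apply: le_trans (ler_frobM _ _) _; rewrite frob_tr -expr2; exact: frob_landing_dir_le.
Qed.

End LandingNorms.

Lemma landing_defect_bound_le (R : realFieldType) (eps lambda eta at_ a d : R) :
  0 <= d <= eps -> eps <= 1 -> 0 <= a <= at_ -> 0 <= eta -> 0 <= lambda ->
  eta * lambda <= 1 / 2 ->
  eta * (at_ ^+ 2 + lambda ^+ 2 * (1 + eps) * eps ^+ 2) <= lambda * (1 - eps) * eps ->
  (1 - 2 * (eta * lambda)) * d + 2 * (eta * lambda) * d ^+ 2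
    + eta ^+ 2 * (a ^+ 2 + lambda ^+ 2 * (d ^+ 2 + d ^+ 3)) <= eps.
Proof.
move=> /andP[d_ge0 d_le] eps_le1 /andP[a_ge0 a_le] eta_ge0 lambda_ge0 t_le step_le.
have t_ge0 : 0 <= eta * lambda by rewrite mulr_ge0.
have pow_le k (x y : R) : 0 <= x -> x <= y -> x ^+ k <= y ^+ k.
  by move=> x_ge0 xy; rewrite lerXn2r // nnegrE (le_trans x_ge0).
have defect_le : (1 - 2 * (eta * lambda)) * d + 2 * (eta * lambda) * d ^+ 2
                 <= (1 - 2 * (eta * lambda)) * eps + 2 * (eta * lambda) * eps ^+ 2.
  by apply: lerD; apply: ler_wpM2l; rewrite ?pow_le //; lra.
have dir_le : a ^+ 2 + lambda ^+ 2 * (d ^+ 2 + d ^+ 3)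
              <= at_ ^+ 2 + lambda ^+ 2 * (1 + eps) * eps ^+ 2.
  rewrite -mulrA; apply: lerD; first exact: pow_le.
  apply: ler_wpM2l; first exact: sqr_ge0.
  have := pow_le 2%N _ _ d_ge0 d_le; have := pow_le 3%N _ _ d_ge0 d_le; lra.
(* Multiplying [step_le] by [eta] bounds the left side by
   [eps - eta * lambda * (1 - eps) * eps]. *)
have := ler_wpM2l eta_ge0 step_le.
have := ler_wpM2l (sqr_ge0 eta) dir_le.
have : 0 <= eta * lambda * ((1 - eps) * eps) by do 2 apply: mulr_ge0 => //; lra.
lra.
Qed.

Lemma Qfun_le_corner (R : realType) (eps lambda at_ : R) :
  0 < eps -> eps <= 1 -> 0 <= lambda -> 0 < at_ ->
  Qfun lambda eps at_
  <= lambda * (1 - eps) * eps / (at_ ^+ 2 + lambda ^+ 2 * (1 + eps) * eps ^+ 2).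
Proof.
move=> eps_gt0 eps_le1 lambda_ge0 at_gt0.
have [one_sub_ge0 one_add_ge0] : 0 <= 1 - eps /\ 0 <= 1 + eps by split; lra.
apply: ge_inf; last first.
  by exists at_, eps; split => //; rewrite subrr mul0r sqrtr0 mulr0 addr0.
exists 0 => _ [a [d [a_gt0 _ d_gt0 _ ->]]].
apply: divr_ge0; apply: addr_ge0.
- by rewrite !mulr_ge0 // ltW.
- by rewrite mulr_ge0 ?sqrtr_ge0 // ltW.
- exact: sqr_ge0.
- by rewrite mulr_ge0 ?sqr_ge0 // mulr_ge0 ?sqr_ge0.
Qed.

Lemma le_eta_star (R : realType) (eps lambda at_ eta : R) :
  0 < eps -> eps <= 1 -> 0 < lambda -> 0 < at_ ->
  eta <= eta_star at_ eps lambda ->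
  eta * lambda <= 1 / 2
  /\ eta * (at_ ^+ 2 + lambda ^+ 2 * (1 + eps) * eps ^+ 2) <= lambda * (1 - eps) * eps.
Proof.
move=> eps_gt0 eps_le1 lambda_gt0 at_gt0.
have denom_gt0 : 0 < at_ ^+ 2 + lambda ^+ 2 * (1 + eps) * eps ^+ 2.
  by rewrite ltr_pwDl ?exprn_gt0 // !mulr_ge0 ?sqr_ge0 //; lra.
rewrite le_min => /andP[eta_le_Q eta_le_half]; split.
  by move: eta_le_half; rewrite ler_pdivlMr ?mulr_gt0 // => ?; lra.
have := le_trans eta_le_Q (Qfun_le_corner eps_gt0 eps_le1 (ltW lambda_gt0) at_gt0).
by rewrite ler_pdivlMr // mulrC.
Qed.

Lemma St_eps_landing_step (R : realType) n p (eps lambda at_ eta : R)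
    (A : 'M[R]_n) (X : 'M[R]_(n, p)) :
  0 < eps -> eps < 1 -> 0 < lambda -> 0 < at_ ->
  0 < eta -> eta <= eta_star at_ eps lambda ->
  A^T = - A -> frob (A *m X) <= at_ -> St_eps eps X ->
  St_eps eps (X - eta *: landing_dir A X lambda).
Proof.
move=> eps_gt0 eps_lt1 lambda_gt0 at_gt0 eta_gt0 eta_le skA AX_le X_St.
have [t_le step_le] := le_eta_star eps_gt0 (ltW eps_lt1) lambda_gt0 at_gt0 eta_le.
have t_ge0 : 0 <= eta * lambda by rewrite mulr_ge0 ?ltW.
rewrite /St_eps -/(orth_defect _).
apply: le_trans (frob_orth_defect_landing_step_le X skA _) _; first by rewrite t_ge0.
by apply: landing_defect_bound_le step_le;
  rewrite ?frob_ge0 ?(ltW eps_lt1) ?(ltW eta_gt0) ?(ltW lambda_gt0).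
Qed.

Theorem proposition5 (R : realType) (n p : nat) (eps lambda at_ : R)
    (Acal : forall k : nat, ('I_k.+1 -> 'M[R]_(n, p)) -> 'M[R]_n)
    (X : nat -> 'M[R]_(n, p)) (eta : nat -> R) :
  (1 <= p)%N -> (p <= n)%N ->
  0 < eps -> eps < 1 -> 0 < lambda -> 0 < at_ ->
  (forall k (Xs : 'I_k.+1 -> 'M[R]_(n, p)), (Acal k Xs)^T = - Acal k Xs) ->
  (forall k (Xs : 'I_k.+1 -> 'M[R]_(n, p)),
      (forall i, St_eps eps (Xs i)) -> frob (Acal k Xs *m Xs ord_max) <= at_) ->
  St_eps eps (X 0%N) ->
  (forall k, X k.+1 = X k - eta k *: (Acal k (fun i : 'I_k.+1 => X i) *m X k
                          + lambda *: (X k *m ((X k)^T *m X k - 1%:M)))) ->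
  (forall k, 0 < eta k) ->
  (forall k, eta k <= eta_star at_ eps lambda) ->
  forall k, St_eps eps (X k).
Proof.
move=> _ _ eps_gt0 eps_lt1 lambda_gt0 at_gt0 skew AX_le X0_St X_rec eta_gt0 eta_le.
elim/ltn_ind => -[|k] IH //; rewrite X_rec.
apply: (St_eps_landing_step eps_gt0 eps_lt1 lambda_gt0 at_gt0 (eta_gt0 k) (eta_le k)).
- exact: skew.
- by apply: AX_le => i; apply: IH.
- exact: IH.
Qed.
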